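(* Let $I$ be a fuzzy implication function, $T$ a t-norm and $j\in\{1,\dots,n_c\}$. Suppose $I$ satisfies the monotonicity of the generalized modus ponens with respect to $T$, i.e. $T(\tilde x,I(\tilde x,y))\le T(x,I(x,y))$ for all $x,\tilde x,y\in[0,1]$ with $\tilde x\le x$. Then for all $R^{S,L}_j,R^{\tilde S,\tilde L}_j\in\mathcal{R}^{I,T}_j$ with $R^{S,L}_j\prec R^{\tilde S,\tilde L}_j$ and all $E^d\in E$, $$\mu_{eval}^{R^{\tilde S,\tilde L}_j,E^d}\le\mu_{eval}^{R^{S,L}_j,E^d},$$ and consequently $\sum_{d=1}^{n_e}\mu_{eval}^{R^{\tilde S,\tilde L}_j,E^d}\le\sum_{d=1}^{n_e}\mu_{eval}^{R^{S,L}_j,E^d}$.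
   Context: A fuzzy implication function is a map $I:[0,1]^2\to[0,1]$ decreasing in the first variable, increasing in the second, with $I(0,0)=I(1,1)=1$, $I(1,0)=0$. A t-norm is a commutative, associative, increasing binary operation on $[0,1]$ with neutral element $1$. Setting: features $X_1,\dots,X_{n_f}$ with domains $D_m\subseteq\mathbb{R}$, target $Y$ with domain $D_Y$; examples $E=\{E^d=(e^d_1,\dots,e^d_{n_f},y^d):d=1,\dots,n_e\}$; each feature $X_m$ has labels $LL_m^1,\dots,LL_m^{l_m}$ with membership functions $\mu_{LL_m^n}:D_m\to[0,1]$; classes $\mathrm{Class}_1,\dots,\mathrm{Class}_{n_c}$ with $\mu_{\mathrm{Class}_j}:D_Y\to[0,1]$. A rule $R^{S,L}_j$ is given by a class index $j$, a set of features $S=\{X_{m_1},\dots,X_{m_s}\}$ and a set $L$ of labels containing exactly one label $LL^{n_{m_i}}_{m_i}$ per feature in $S$. $\mathcal{R}^{I,T}_j$ is the set of such rules with class $j$, evaluated with $T$ and $I$. For an example $E^d$: $\mu_{ant}^{R^{S,L}_j,E^d}=T(\mu_{LL^{n_{m_1}}_{m_1}}(e^d_{m_1}),\dots,\mu_{LL^{n_{m_s}}_{m_s}}(e^d_{m_s}))$, $\mu_{con}^{R^{S,L}_j,E^d}=\mu_{\mathrm{Class}_j}(y^d)$, $\mu_{eval}^{R^{S,L}_j,E^d}=T\big(\mu_{ant}^{R^{S,L}_j,E^d},I(\mu_{ant}^{R^{S,L}_j,E^d},\mu_{con}^{R^{S,L}_j,E^d})\big)$. $R^{\tilde S,\tilde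 L}_{\tilde j}$ is a refinement of $R^{S,L}_j$, written $R^{S,L}_j\prec R^{\tilde S,\tilde L}_{\tilde j}$, iff $\tilde j=j$, $S\subsetneq\tilde S$, and every label of $L$ belongs to $\tilde L$. *)

From mathcomp Require Import all_boot all_order all_algebra.
Set Implicit Arguments. Unset Strict Implicit. Unset Printing Implicit Defensive.
Import Order.TTheory GRing.Theory Num.Theory.
Local Open Scope ring_scope.

Section Fuzzy.
Variable R : realFieldType.

Definition unit_int (x : R) : Prop := 0 <= x <= 1.

Definition is_tnorm (T : R -> R -> R) : Prop :=
  [/\ (forall x y, unit_int x -> unit_int y -> unit_int (T x y)),
      (forall x y, unit_int x -> unit_int y -> T x y = T y x),
      (forall x y z, unit_int x -> unit_int y -> unit_int z ->
         T x (T y z) = T (T x y) z),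
      (forall x x' y y', unit_int x -> unit_int x' -> unit_int y -> unit_int y' ->
         x <= x' -> y <= y' -> T x y <= T x' y') &
      (forall x, unit_int x -> T x 1 = x)].

Definition is_fuzzy_implication (I : R -> R -> R) : Prop :=
  [/\ (forall x y, unit_int x -> unit_int y -> unit_int (I x y)),
      (forall x x' y, unit_int x -> unit_int x' -> unit_int y ->
         x <= x' -> I x' y <= I x y),
      (forall x y y', unit_int x -> unit_int y -> unit_int y' ->
         y <= y' -> I x y <= I x y'),
      I 0 0 = 1 & I 1 1 = 1 /\ I 1 0 = 0].

Definition mon_gmp (I T : R -> R -> R) : Prop :=
  forall x xt y, unit_int x -> unit_int xt -> unit_int y ->
    xt <= x -> T xt (I xt y) <= T x (I x y).

Definition tnormS (nf : nat) (T : R -> R -> R) (S : {set 'I_nf}) (a : 'I_nf -> R) : R :=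
  foldr (fun m acc => T (a m) acc) 1 (enum S).

End Fuzzy.

(* A rule R^{S,L}_j: class index j, feature set S, and one label index
   per feature (only the labels of features in S are meaningful). *)
Record rule (nf nc : nat) (l : 'I_nf -> nat) := Rule {
  rcls : 'I_nc;
  rS : {set 'I_nf};
  rL : forall m : 'I_nf, 'I_(l m) }.

Definition refines (nf nc : nat) (l : 'I_nf -> nat) (r rt : rule nc l) : Prop :=
  [/\ rcls rt = rcls r, rS r \proper rS rt & forall m, m \in rS r -> rL rt m = rL r m].

Section Eval.
Variable R : realFieldType.
Variables (nf nc : nat) (l : 'I_nf -> nat).
Variable mu : forall m : 'I_nf, 'I_(l m) -> R -> R.
Variable muClass : 'I_nc -> R -> R.
Variables (T I : R -> R -> R).

Definition mu_ant (r : rule nc l) (e : 'I_nf -> R) : R :=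
  tnormS T (rS r) (fun m => mu (rL r m) (e m)).

Definition mu_con (r : rule nc l) (y : R) : R := muClass (rcls r) y.

Definition mu_eval (r : rule nc l) (e : 'I_nf -> R) (y : R) : R :=
  T (mu_ant r e) (I (mu_ant r e) (mu_con r y)).
End Eval.

From mathcomp Require Import all_boot all_order all_algebra.
Import Order.TTheory GRing.Theory Num.Theory.
Local Open Scope ring_scope.

(* Since [T x y <= T 1 y = y] on [0,1], dropping conjuncts can only increase
   a t-norm conjunction; refining a rule adds conjuncts to its antecedent,
   so the antecedent degree decreases, and monotonicity of the generalized
   modus ponens transfers this to the evaluation degree. *)

Lemma subseq_enum (T : finType) (A B : {pred T}) :
  A \subset B -> subseq (enum A) (enum B).
Proof.
move=> /subsetP subAB.
have -> : enum A = [seq x <- enum B | x \in A].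
  rewrite /enum_mem -filter_predI; apply: eq_filter => x /=.
  by case: (boolP (x \in A)) => // /subAB ->.
exact: filter_subseq.
Qed.

Section TnormConjunction.
Variables (R : realFieldType) (T : R -> R -> R).
Hypothesis hT : is_tnorm T.

Lemma tnorm_le_r x y : unit_int x -> unit_int y -> T x y <= y.
Proof.
case: hT => _ commT _ monoT unitT ux uy.
have u1 : unit_int (1 : R) by rewrite /unit_int ler01 lexx.
have /andP[_ x_le1] := ux.
by rewrite -[leRHS](unitT y) // -(commT 1 y) //; apply: monoT.
Qed.

Lemma foldr_tnorm_unit (s : seq R) :
  {in s, forall x, unit_int x} -> unit_int (foldr T 1 s).
Proof.
case: hT => rangeT _ _ _ _.
elim: s => [|x s IH] us /=; first by rewrite /unit_int ler01 lexx.
apply: rangeT; first by apply: us; rewrite mem_head.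
by apply: IH => z zs; apply: us; rewrite inE zs orbT.
Qed.

Lemma foldr_tnorm_subseq (s1 s2 : seq R) :
  subseq s1 s2 -> {in s2, forall x, unit_int x} ->
  foldr T 1 s2 <= foldr T 1 s1.
Proof.
case: hT => _ _ _ monoT _.
elim: s2 s1 => [|y s2 IH] s1; first by rewrite subseq0 => /eqP ->.
move=> sub us2.
have uy : unit_int y by apply: us2; rewrite mem_head.
have us2' : {in s2, forall x, unit_int x}.
  by move=> z zs; apply: us2; rewrite inE zs orbT.
have uF2 := foldr_tnorm_unit _ us2'.
case: s1 sub => [_|x s1] /=.
  exact: le_trans (tnorm_le_r _ _ uy uF2) (IH [::] (sub0seq s2) us2').
case: eqP => [-> sub | _ sub].
  have uF1 := foldr_tnorm_unit _ (fun z zs => us2' z (mem_subseq sub zs)).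
  by apply: monoT; rewrite ?lexx //; apply: IH.
exact: le_trans (tnorm_le_r _ _ uy uF2) (IH _ sub us2').
Qed.

Variable nf : nat.

Lemma tnormSE (S : {set 'I_nf}) (a : 'I_nf -> R) :
  tnormS T S a = foldr T 1 (map a (enum S)).
Proof. by rewrite foldr_map. Qed.

Lemma tnormS_unit (S : {set 'I_nf}) (a : 'I_nf -> R) :
  (forall m, unit_int (a m)) -> unit_int (tnormS T S a).
Proof.
by move=> ua; rewrite tnormSE; apply: foldr_tnorm_unit => _ /mapP[m _ ->].
Qed.

Lemma eq_in_tnormS (S : {set 'I_nf}) (a b : 'I_nf -> R) :
  {in S, a =1 b} -> tnormS T S a = tnormS T S b.
Proof.
move=> eq_ab; rewrite !tnormSE; congr foldr.
by apply/eq_in_map => m /[!mem_enum]/eq_ab.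
Qed.

Lemma tnormS_subset (A B : {set 'I_nf}) (a : 'I_nf -> R) :
  (forall m, unit_int (a m)) -> A \subset B -> tnormS T B a <= tnormS T A a.
Proof.
move=> ua subAB; rewrite !tnormSE.
apply: foldr_tnorm_subseq; first exact/map_subseq/subseq_enum.
by move=> _ /mapP[m _ ->].
Qed.

End TnormConjunction.

Section RuleRefinement.
Variables (R : realFieldType) (nf nc : nat) (l : 'I_nf -> nat).
Variables (mu : forall m : 'I_nf, 'I_(l m) -> R -> R) (muClass : 'I_nc -> R -> R).
Variables (T I : R -> R -> R).
Hypothesis hT : is_tnorm T.

Lemma mu_ant_unit (r : rule nc l) (e : 'I_nf -> R) :
  (forall m (n : 'I_(l m)), unit_int (mu m n (e m))) ->
  unit_int (mu_ant mu T r e).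
Proof. by move=> umu; apply: tnormS_unit. Qed.

Lemma mu_ant_refines (r rt : rule nc l) (e : 'I_nf -> R) :
  (forall m (n : 'I_(l m)), unit_int (mu m n (e m))) ->
  refines r rt -> mu_ant mu T rt e <= mu_ant mu T r e.
Proof.
move=> umu [_ /proper_sub subS eqL].
have -> : mu_ant mu T r e = tnormS T (rS r) (fun m => mu m (rL rt m) (e m)).
  by apply: eq_in_tnormS => m /eqL ->.
exact: tnormS_subset.
Qed.

Lemma mu_eval_refines (r rt : rule nc l) (e : 'I_nf -> R) (y : R) :
  mon_gmp I T ->
  (forall m (n : 'I_(l m)), unit_int (mu m n (e m))) ->
  unit_int (muClass (rcls r) y) ->
  refines r rt -> mu_eval mu muClass T I rt e y <= mu_eval mu muClass T I r e y.
Proof.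
move=> hMP umu uy ref; have [eq_cls _ _] := ref.
rewrite /mu_eval /mu_con eq_cls.
by apply: hMP => //; [exact: mu_ant_unit | exact: mu_ant_unit | exact: mu_ant_refines].
Qed.

End RuleRefinement.

Theorem proposition4 (R : realFieldType)
  (nf : nat) (D : 'I_nf -> pred R) (l : 'I_nf -> nat)
  (mu : forall m : 'I_nf, 'I_(l m) -> R -> R)
  (hmu : forall m (n : 'I_(l m)) x, x \in D m -> unit_int (mu m n x))
  (nc : nat) (DY : pred R) (muClass : 'I_nc -> R -> R)
  (hmuC : forall j x, x \in DY -> unit_int (muClass j x))
  (ne : nat) (e : 'I_ne -> 'I_nf -> R) (y : 'I_ne -> R)
  (he : forall d m, e d m \in D m) (hy : forall d, y d \in DY)
  (I T : R -> R -> R)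
  (hI : is_fuzzy_implication I) (hT : is_tnorm T) (hMP : mon_gmp I T)
  (j : 'I_nc) (r rt : rule nc l) :
  rcls r = j -> rcls rt = j -> refines r rt ->
  (forall d, mu_eval mu muClass T I rt (e d) (y d)
             <= mu_eval mu muClass T I r (e d) (y d)) /\
  \sum_(d < ne) mu_eval mu muClass T I rt (e d) (y d)
    <= \sum_(d < ne) mu_eval mu muClass T I r (e d) (y d).
Proof.
move=> _ _ ref.
have le_eval d : mu_eval mu muClass T I rt (e d) (y d)
                 <= mu_eval mu muClass T I r (e d) (y d).
  apply: mu_eval_refines => //; first by move=> m n; apply: hmu.
  exact: hmuC.
by split=> //; apply: ler_sum.
Qed.
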